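(* Let $M=(X,rk)$ be a matroid on a finite ground set $X$ with rank $r=rk(X)$. Then for every integer $i$ with $i>r-d_2(M)$, \[[x^i]T_M(x,1)=\binom{|X|-i-1}{r-i}-\sum_{\substack{C\in \mathcal{C}(M),\\ |C|<d_2(M)}} \binom{|X|-|C|-i-1}{|X|-r-1}.\]
   Context: $T_M(x,y)=\sum_{A\subseteq X}(x-1)^{r-rk(A)}(y-1)^{|A|-rk(A)}$ is the Tutte polynomial of $M$, and $[x^i]f(x)$ denotes the coefficient of $x^i$. A circuit of $M$ is a set $C\subseteq X$ with $rk(C\setminus\{e\})=|C|-1=rk(C)$ for all $e\in C$; $\mathcal{C}(M)$ is the set of all circuits. Let $\mathcal{D}(M)=\{A\subseteq X: rk(A\setminus\{e\})=rk(A)\text{ for every } e\in A\}$ and, for $k\ge1$, $d_k(M)=\min\{|A|: A\in\mathcal{D}(M),\ rk(A)=|A|-k\}$. *)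

From HB Require Import structures.
From mathcomp Require Import all_boot all_order all_algebra.
Set Implicit Arguments. Unset Strict Implicit. Unset Printing Implicit Defensive.
Import Order.TTheory GRing.Theory Num.Theory.

Record matroid (T : finType) := Matroid {
  rk : {set T} -> nat;
  rk_le_card : forall A : {set T}, rk A <= #|A|;
  rk_mono : forall A B : {set T}, A \subset B -> rk A <= rk B;
  rk_submod : forall A B : {set T},
      rk (A :|: B) + rk (A :&: B) <= rk A + rk B
}.

Section Defs.
Variables (T : finType) (M : matroid T).

Definition mrank : nat := rk M [set: T].

(* Tutte polynomial T_M(x,y) = sum_A (x-1)^(r-rk A) (y-1)^(|A|-rk A),
   as a polynomial in x (outer variable) with coefficients in Z[y]. *)
Local Open Scope ring_scope.
Definition tutte : {poly {poly int}} :=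
  \sum_(A : {set T})
     ('X - 1) ^+ (mrank - rk M A)%N * (('X - 1)%:P) ^+ (#|A| - rk M A)%N.

Definition tutte_x1 : {poly int} := map_poly (fun q : {poly int} => q.[1]) tutte.
Local Close Scope ring_scope.

(* C is a circuit: rk(C \ e) = |C| - 1 = rk(C) for all e in C
   (written with additions to avoid truncated subtraction). *)
Definition is_circuit (C : {set T}) : bool :=
  (rk M C + 1 == #|C|) && [forall e in C, rk M (C :\ e) + 1 == #|C|].

Definition inD (A : {set T}) : bool :=
  [forall e in A, rk M (A :\ e) == rk M A].

(* d_k(M) = min{|A| : A in D(M), rk(A) = |A| - k}  (meaningful when such an
   A exists; the default value #|T|.+1 is never used in the theorem, which
   assumes existence). *)
Definition dk (k : nat) : nat :=
  \big[minn/#|T|.+1]_(A : {set T} | inD A && (rk M A + k == #|A|)) #|A|.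
End Defs.

Definition binz (n k : int) : int :=
  if (0 <= n)%R && (0 <= k)%R then Posz ('C(absz n, absz k)) else 0%R.

From HB Require Import structures.
From mathcomp Require Import all_boot all_order all_algebra.
From mathcomp Require Import zify.
Import Order.TTheory GRing.Theory Num.Theory.

(* T_M(x,1) is the sum of (x-1)^(r-|A|) over the independent sets A, and only
   sets with |A| <= r - i < d_2 contribute to the coefficient of x^i.  A set of
   size below d_2 has nullity at most 1, so it contains at most one circuit (two
   circuits C1 <> C2 would give C1 :|: C2 nullity 2 by submodularity); hence its
   independence indicator is 1 minus the number of circuits it contains.  Summing
   over all sets and over the supersets of each small circuit, the identity
   sum_(k <= R) C(m,k) (x-1)^(R-k) = sum_i C(m-1-i, R-i) x^i  (R < m)
   turns both sums into the binomial coefficients of the statement. *)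


Section MatroidCircuits.
Context {T : finType} (M : matroid T).
Local Notation rk := (rk M).

Lemma rk_le_setD (A C : {set T}) : rk A <= rk C + #|A :\: C|.
Proof.
have sAU : A \subset C :|: A :\: C.
  by apply/subsetP => x; rewrite !inE; case: (x \in C).
have := rk_mono M sAU; have := rk_submod M C (A :\: C).
have := rk_le_card M (A :\: C); lia.
Qed.

Lemma rk_indep_sub (A C : {set T}) : C \subset A -> rk A = #|A| -> rk C = #|C|.
Proof.
move=> sCA; have := rk_le_setD A C; rewrite cardsDS //.
have := rk_le_card M C; have := subset_leq_card sCA; lia.
Qed.

Lemma circuitP (C : {set T}) :
  reflect (rk C + 1 = #|C| /\ {in C, forall e, rk (C :\ e) + 1 = #|C|})
          (is_circuit M C).
Proof.
apply: (iffP andP) => [[/eqP rkC /forall_inP rkCe] | [rkC rkCe]].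
  by split=> // e /rkCe /eqP.
by split; [apply/eqP | apply/forall_inP => e /rkCe ->].
Qed.

Lemma rk_proper_circuit {C B : {set T}} :
  is_circuit M C -> B \proper C -> rk B = #|B|.
Proof.
move=> /circuitP [_ rkCe] /properP [sBC [e eC eB]].
apply: (@rk_indep_sub (C :\ e)).
  by apply/subsetP => x xB; rewrite !inE (subsetP sBC) // andbT; apply: contraNneq eB => <-.
by have := rkCe e eC; rewrite (cardsD1 e C) eC; lia.
Qed.

Lemma minset_nullity (k : nat) (A : {set T}) : rk A + k <= #|A| ->
  exists2 S : {set T}, S \subset A &
    rk S + k = #|S| /\ {in S, forall e, rk (S :\ e) + k = #|S|}.
Proof.
move=> nullA.
have [S /minsetP [nullS minS] sSA] :=
  minset_exists (P := fun B : {set T} => rk B + k <= #|B|) nullA.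
exists S => //.
have rkSe e : e \in S -> rk (S :\ e) + k = #|S|.
  move=> eS; have : ~~ (rk (S :\ e) + k <= #|S :\ e|).
    apply/negP => /minS /(_ (subD1set S e)) /setP /(_ e).
    by rewrite !inE eS eqxx.
  have := rk_mono M (subD1set S e); rewrite (cardsD1 e S) eS in nullS *; lia.
split=> //; have [S0 | [e eS]] := set_0Vmem S.
  by move: nullS; rewrite S0 cards0; have := rk_le_card M set0; rewrite cards0; lia.
by have := rkSe e eS; have := rk_mono M (subD1set S e); lia.
Qed.

Lemma exists_circuit_sub (A : {set T}) :
  rk A < #|A| -> exists2 C, is_circuit M C & C \subset A.
Proof.
rewrite -addn1 => /minset_nullity [C sCA [rkC rkCe]].
by exists C => //; apply/circuitP.
Qed.

Lemma dk2_le {S : {set T}} : inD M S -> rk S + 2 = #|S| -> dk M 2 <= #|S|.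
Proof.
move=> DS rkS; rewrite /dk; have := mem_index_enum S.
elim: (index_enum _) => // B l IH; rewrite big_cons inE => /predU1P [<- | /IH].
  by rewrite DS rkS eqxx geq_minl.
by case: ifP => // _ /(leq_trans _); apply; apply: geq_minr.
Qed.

Lemma nullity_le1_small {A : {set T}} : #|A| < dk M 2 -> #|A| <= rk A + 1.
Proof.
move=> ltAd; rewrite leqNgt; apply/negP; rewrite -addnS => /minset_nullity.
move=> [S sSA [rkS rkSe]].
have DS : inD M S by apply/forall_inP => e /rkSe; lia.
by have := dk2_le DS rkS; have := subset_leq_card sSA; lia.
Qed.

Lemma circuit_unique_small (A C1 C2 : {set T}) : #|A| < dk M 2 ->
  is_circuit M C1 -> is_circuit M C2 -> C1 \subset A -> C2 \subset A -> C1 = C2.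
Proof.
move=> ltAd cC1 cC2 sC1A sC2A; apply/eqP/negPn/negP => neC12.
have /circuitP [rkC1 _] := cC1; have /circuitP [rkC2 _] := cC2.
have nsC12 : ~~ (C1 \subset C2).
  apply/negP => sC12; have : C1 \proper C2 by rewrite properEneq neC12.
  by move/(rk_proper_circuit cC2); lia.
have pC12 : C1 :&: C2 \proper C1.
  by rewrite properEneq subsetIl andbT; apply: contra nsC12 => /eqP <-; apply: subsetIr.
have sUA : C1 :|: C2 \subset A by rewrite subUset sC1A sC2A.
have := nullity_le1_small (leq_ltn_trans (subset_leq_card sUA) ltAd).
have := rk_proper_circuit cC1 pC12; have := rk_submod M C1 C2.
have := cardsUI C1 C2; lia.
Qed.

Lemma card_circuits_sub_small (A : {set T}) : #|A| < dk M 2 ->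
  #|[set C | is_circuit M C & C \subset A]| = (rk A != #|A|).
Proof.
move=> ltAd; have [indA | depA] := eqVneq (rk A) #|A|.
  apply/eqP; rewrite cards_eq0; apply/eqP/setP => C; rewrite !inE.
  by apply/negbTE/andP => [[/circuitP [rkC _] /rk_indep_sub /(_ indA)]]; lia.
have [C0 cC0 sC0A] : exists2 C, is_circuit M C & C \subset A.
  by apply: exists_circuit_sub; rewrite ltn_neqAle depA rk_le_card.
rewrite /= -(cards1 C0); apply: eq_card => C; rewrite !inE.
apply/andP/eqP => [[cC sCA] | ->] //.
exact: circuit_unique_small ltAd cC cC0 sCA sC0A.
Qed.

Local Open Scope ring_scope.

Lemma sum_indep_small (V : zmodType) (F : nat -> V) :
  (forall k, (dk M 2 <= k)%N -> F k = 0) ->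
  \sum_(A : {set T} | rk A == #|A|) F #|A| =
    \sum_(A : {set T}) F #|A|
    - \sum_(C : {set T} | is_circuit M C && (#|C| < dk M 2)%N)
        \sum_(A : {set T} | C \subset A) F #|A|.
Proof.
move=> Fd; rewrite (exchange_big_dep predT) //= big_mkcond -sumrB.
apply: eq_bigr => A _; have [leDA | ltAd] := leqP (dk M 2) #|A|.
  by rewrite Fd // big1 ?subr0 ?if_same.
rewrite (eq_bigl [in [set C | is_circuit M C & C \subset A]]) => [|C].
  by rewrite sumr_const card_circuits_sub_small //; case: eqP; rewrite ?subrr ?subr0.
rewrite inE; have [sCA | _] := boolP (C \subset A); rewrite ?andbF ?andbT //.
by rewrite (leq_ltn_trans (subset_leq_card sCA) ltAd) andbT.
Qed.
End MatroidCircuits.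

Local Open Scope ring_scope.

Section SubsetSums.
Context {T : finType} {V : nmodType}.

Lemma sum_subsets_card (D : {set T}) (F : nat -> V) :
  \sum_(A : {set T} | A \subset D) F #|A| = \sum_(k < #|D|.+1) F k *+ 'C(#|D|, k).
Proof.
rewrite (partition_big (fun A : {set T} => inord #|A| : 'I_#|D|.+1) predT) //=.
apply: eq_bigr => k _; rewrite -cards_draws -sumr_const.
have memDk (A : {set T}) :
  (A \subset D) && (inord #|A| == k) = (A \in [set B : {set T} | B \subset D & #|B| == k]).
  rewrite inE; have [sAD /= | //] := boolP (A \subset D).
  have ltAD : (#|A| < #|D|.+1)%N by rewrite ltnS subset_leq_card.
  by apply/eqP/eqP => [<- | eqAk]; [rewrite inordK | apply: val_inj; rewrite /= inordK eqAk].
by apply: eq_big => // A; rewrite memDk inE => /andP [_ /eqP ->].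
Qed.

Lemma sum_supsets_card (C : {set T}) (F : nat -> V) :
  \sum_(A : {set T} | C \subset A) F #|A|
    = \sum_(k < (#|T| - #|C|).+1) F (k + #|C|)%N *+ 'C(#|T| - #|C|, k).
Proof.
rewrite (reindex_onto (fun B => B :|: C) (fun A => A :\: C)); last first.
  by move=> A sCA; rewrite -[RHS](setID A C) (setIidPr sCA) setUC.
have cardCC : #|~: C| = (#|T| - #|C|)%N by rewrite cardsCs setCK.
rewrite -cardCC -(sum_subsets_card _ (fun k => F (k + #|C|)%N)).
apply: eq_big => [B | B /andP [_]]; rewrite setDUl setDv setU0.
  by rewrite subsetUr -disjoints_subset; apply/eqP/setDidPl.
move/eqP/setDidPl/disjoint_setI0 => BC0.
by have := cardsUI B C; rewrite BC0 cards0 addn0 => ->.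
Qed.
End SubsetSums.

Lemma binz_nat (a b : nat) : binz a b = 'C(a, b).
Proof. by []. Qed.

Lemma binz_negr (a b : int) : b < 0 -> binz a b = 0.
Proof. by rewrite /binz ltNge => /negbTE ->; rewrite andbF. Qed.

Lemma binz_negl (a b : int) : a < 0 -> binz a b = 0.
Proof. by rewrite /binz ltNge => /negbTE ->. Qed.

Lemma binz_sub (a b : int) : binz a (a - b) = binz a b.
Proof.
case: a => [n | n]; last by rewrite !binz_negl.
case: b => [k | k].
  have [lekn | ltnk] := leqP k n; first by rewrite subzn // !binz_nat bin_sub.
  by rewrite binz_negr ?binz_nat ?bin_small //; lia.
rewrite [RHS]binz_negr // (_ : n%:Z - Negz k = (n + k.+1)%N); last by lia.
by rewrite binz_nat bin_small //; lia.
Qed.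

Lemma binzS (a b : int) : 0 <= a -> binz (a + 1) (b + 1) = binz a b + binz a (b + 1).
Proof.
case: a => [n _ | //]; case: b => [k | [|k]].
- by rewrite -!PoszD !binz_nat !addn1 binS /= PoszD addrC.
- by rewrite [binz n _]binz_negr // add0r (_ : Negz 0 + 1 = 0) // /binz /= !bin0.
- by rewrite NegzE !binz_negr //; lia.
Qed.

Lemma sum_binomial_Xsub1S (m R : nat) :
  \sum_(k < R.+2) ('X - 1 : {poly int}) ^+ (R.+1 - k) *+ 'C(m, k)
    = ('X - 1) * \sum_(k < R.+1) ('X - 1) ^+ (R - k) *+ 'C(m, k) + 'C(m, R.+1)%:R.
Proof.
rewrite big_ord_recr /= subnn expr0 mulr_sumr; congr (_ + _).
by apply: eq_bigr => k _; rewrite subSn ?leq_ord // exprS mulrnAr.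
Qed.

Lemma coef_sum_binomial_Xsub1 (m R i : nat) : (R < m)%N ->
  (\sum_(k < R.+1) ('X - 1 : {poly int}) ^+ (R - k) *+ 'C(m, k))`_i
    = binz (m%:Z - i%:Z - 1) (R%:Z - i%:Z).
Proof.
elim: R i => [|R IH] i ltRm.
  rewrite big_ord1 subnn expr0 bin0 coefMn coef1; case: i => [|i].
    by rewrite subr0 (_ : m%:Z - 1 = m.-1) ?binz_nat ?bin0 //; lia.
  by rewrite binz_negr //; lia.
have ltRm' : (R < m)%N by apply: ltnW.
rewrite sum_binomial_Xsub1S coefD mulrBl mul1r coefB coefXM coefMn coef1.
case: i => [|j] /=.
  have Pascal : binz m R.+1 = binz (m%:Z - 1) R + binz (m%:Z - 1) (R%:Z + 1).
    by rewrite -binzS; [congr binz; lia | lia].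
  rewrite sub0r subr0 mulr1n IH // natz -binz_nat Pascal.
  by rewrite !subr0 addKr (_ : R.+1%:Z = R%:Z + 1) //; lia.
rewrite mul0rn addr0 !IH //.
have [lejR | ltRj] := leqP j R; last by rewrite !binz_negr ?subrr //; lia.
have Pascal : binz (m%:Z - j%:Z - 1) (R%:Z - j%:Z) =
    binz (m%:Z - j.+1%:Z - 1) (R.+1%:Z - j.+1%:Z) + binz (m%:Z - j.+1%:Z - 1) (R%:Z - j.+1%:Z).
  rewrite [RHS]addrC (_ : R.+1%:Z - j.+1%:Z = R%:Z - j.+1%:Z + 1); last by lia.
  by rewrite -binzS; [congr binz; lia | lia].
by rewrite Pascal addrK.
Qed.

Definition indep_coef (r i k : nat) : int :=
  if (k <= r)%N then (('X - 1 : {poly int}) ^+ (r - k))`_i else 0.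

Lemma indep_coef_eq0 (r i k : nat) : (r < k + i)%N -> indep_coef r i k = 0.
Proof.
move=> ltr; rewrite /indep_coef; case: ifP => // lekr.
by apply: nth_default; rewrite -polyC1 size_exp_XsubC; lia.
Qed.

Lemma sum_indep_coef_binomial (r i N c : nat) : (r < N + c)%N ->
  \sum_(k < N.+1) indep_coef r i (k + c) *+ 'C(N, k)
    = binz (N%:Z - i%:Z - 1) (r%:Z - c%:Z - i%:Z).
Proof.
move=> ltr; have [lecr | ltrc] := leqP c r; last first.
  rewrite binz_negr ?big1 // => [k _|]; last by lia.
  by rewrite /indep_coef ifN ?mul0rn //; lia.
rewrite (subzn lecr) -coef_sum_binomial_Xsub1; last by lia.
rewrite coef_sum (big_ord_widen N.+1
  (fun k => (('X - 1 : {poly int}) ^+ (r - c - k) *+ 'C(N, k))`_i)); last by lia.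
rewrite [RHS]big_mkcond; apply: eq_bigr => k _; rewrite coefMn /indep_coef ltnS.
rewrite (_ : (k + c <= r)%N = (k <= r - c)%N); last by lia.
by case: ifP; rewrite ?mul0rn // addnC subnDA.
Qed.

Lemma coef_tutte_x1 (T : finType) (M : matroid T) (i : nat) :
  (tutte_x1 M)`_i = \sum_(A : {set T} | rk M A == #|A|) indep_coef (mrank M) i #|A|.
Proof.
rewrite /tutte_x1 /tutte (_ : (fun q => q.[1]) = horner_eval 1) //.
rewrite rmorph_sum coef_sum [RHS]big_mkcond; apply: eq_bigr => A _.
rewrite rmorphM rmorphXn rmorphB /= map_polyX rmorph1 rmorphXn /= map_polyC /=.
rewrite /horner_eval !hornerE subrr expr0n /indep_coef.
have [indA | depA] := eqVneq (rk M A) #|A|.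
  by rewrite indA subnn mulr1 -indA rk_mono ?subsetT.
by rewrite subn_eq0 leqNgt ltn_neqAle depA rk_le_card mulr0 coef0.
Qed.

Theorem theorem3p4 (T : finType) (M : matroid T) (i : nat) :
  (exists A : {set T}, inD M A && (rk M A + 2 == #|A|)%N) ->
  (mrank M)%:Z - (dk M 2)%:Z < i%:Z ->
  (tutte_x1 M)`_i =
    binz (#|T|%:Z - i%:Z - 1) ((mrank M)%:Z - i%:Z)
    - \sum_(C : {set T} | is_circuit M C && (#|C| < dk M 2)%N)
        binz (#|T|%:Z - #|C|%:Z - i%:Z - 1) (#|T|%:Z - (mrank M)%:Z - 1).
Proof.
move=> [S /andP [_ /eqP rkS]] ltdi.
have ltrn : (mrank M < #|T|)%N.
  have := rk_le_setD M setT S; rewrite cardsDS ?subsetT // cardsT.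
  by have := max_card S; rewrite /mrank; lia.
rewrite coef_tutte_x1 sum_indep_small => [|k ledk]; last first.
  by apply: indep_coef_eq0; lia.
congr (_ - _).
  rewrite -(subr0 (mrank M)%:Z) -(sum_indep_coef_binomial _ _ _ 0) ?addn0 //.
  under [RHS]eq_bigr do rewrite addn0.
  by rewrite -cardsT -sum_subsets_card; apply: eq_bigl => A; rewrite subsetT.
apply: eq_bigr => C _; have := max_card C => leCT.
rewrite sum_supsets_card sum_indep_coef_binomial ?subnK //.
by rewrite -(binz_sub _ (_ - _ - 1)); congr binz; lia.
Qed.
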